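(* Let $N\ge 2$, $n\ge1$, and let $\rho$ be a density matrix on $\mathbb{C}^N$. Then, computing $\mathcal{C}$ on the $N^{2n}$-dimensional space $(\mathbb{C}^N)^{\otimes 2n}$, $$\mathcal{C}(\rho^{\otimes n}\otimes\mathcal{I}^{\otimes n})\le n\,\frac{S(\rho)+\log_2 N}{2\log_2 N}\,D(\rho,\mathcal{I})= n\left(\frac{\mathcal{C}(\rho)}{2}+\frac{D(\rho,\mathcal{I})}{2}\right)\le n\left(\frac{\mathcal{C}(\rho)}{2}+\frac12\right).$$
   Context: For a density matrix $\rho$ (positive semidefinite, trace one) on an $N$-dimensional Hilbert space, $\mathcal{I}=\mathbb{I}/N$ is the normalized maximally mixed state. The von Neumann entropy is $S(\rho)=-\mathrm{Tr}[\rho\log_2\rho]$, and $D(\rho,\sigma)=\tfrac12\|\rho-\sigma\|_1$ is the trace distance. The Quantum Statistical Complexity Measure is $\mathcal{C}(\rho)=\frac{1}{\log_2 M}\,S(\rho)\,D(\rho,\mathbb{I}/M)$ for a state on an $M$-dimensional space. *)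

From Stdlib Require Import Reals ClassicalEpsilon.
Open Scope R_scope.

Record C : Type := mkC { re : R ; im : R }.
Definition C0 : C := mkC 0 0.
Definition C1 : C := mkC 1 0.
Definition RtoC (x : R) : C := mkC x 0.
Definition Cadd (a b : C) : C := mkC (re a + re b) (im a + im b).
Definition Copp (a : C) : C := mkC (- re a) (- im a).
Definition Cmul (a b : C) : C :=
  mkC (re a * re b - im a * im b) (re a * im b + im a * re b).
Definition Cconj (a : C) : C := mkC (re a) (- im a).

Fixpoint Csum (n : nat) (f : nat -> C) : C :=
  match n with O => C0 | S k => Cadd (Csum k f) (f k) end.
Fixpoint Rsum (n : nat) (f : nat -> R) : R :=
  match n with O => 0 | S k => Rsum k f + f k end.

Definition Mat := nat -> nat -> C.
Definition mmul (N : nat) (A B : Mat) : Mat :=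
  fun i j => Csum N (fun k => Cmul (A i k) (B k j)).
Definition adj (A : Mat) : Mat := fun i j => Cconj (A j i).
Definition idM : Mat := fun i j => if Nat.eqb i j then C1 else C0.
Definition Msub (A B : Mat) : Mat := fun i j => Cadd (A i j) (Copp (B i j)).
Definition Mscale (x : R) (A : Mat) : Mat := fun i j => Cmul (RtoC x) (A i j).
Definition trace (N : nat) (A : Mat) : C := Csum N (fun i => A i i).

Definition Meq (N : nat) (A B : Mat) : Prop :=
  forall i j, (i < N)%nat -> (j < N)%nat -> A i j = B i j.

Definition unitary (N : nat) (U : Mat) : Prop :=
  Meq N (mmul N U (adj U)) idM /\ Meq N (mmul N (adj U) U) idM.

Definition hermitian (N : nat) (A : Mat) : Prop := Meq N A (adj A).

Definition psd (N : nat) (A : Mat) : Prop :=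
  forall v : nat -> C,
    0 <= re (Csum N (fun i => Csum N (fun j =>
                Cmul (Cconj (v i)) (Cmul (A i j) (v j))))).

Definition density (N : nat) (rho : Mat) : Prop :=
  hermitian N rho /\ psd N rho /\ trace N rho = C1.

Definition maxmixed (N : nat) : Mat := Mscale (/ INR N) idM.

Definition kron (dB : nat) (A B : Mat) : Mat :=
  fun i j => Cmul (A (Nat.div i dB) (Nat.div j dB)) (B (Nat.modulo i dB) (Nat.modulo j dB)).

Fixpoint tpow (d : nat) (A : Mat) (n : nat) : Mat :=
  match n with O => idM | S k => kron d (tpow d A k) A end.

Definition spectral (N : nat) (A : Mat) (U : Mat) (lam : nat -> R) : Prop :=
  unitary N U /\
  Meq N A (fun i j => Csum N (fun k => Cmul (U i k) (Cmul (RtoC (lam k)) (Cconj (U j k))))).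

(* the (multiset of) eigenvalues of a Hermitian matrix, chosen by
   the spectral theorem; unspecified for non-Hermitian input *)
Definition eigs (N : nat) (A : Mat) : nat -> R :=
  epsilon (inhabits (fun _ : nat => 0)) (fun lam => exists U, spectral N A U lam).

Definition log2 (x : R) : R := ln x / ln 2.

Definition xlogx (x : R) : R := if Rle_dec x 0 then 0 else x * log2 x.

(* von Neumann entropy S(rho) = - Tr[rho log2 rho] *)
Definition vnS (N : nat) (rho : Mat) : R :=
  - Rsum N (fun i => xlogx (eigs N rho i)).

(* trace distance D(rho,sigma) = 1/2 || rho - sigma ||_1 *)
Definition tdist (N : nat) (rho sigma : Mat) : R :=
  / 2 * Rsum N (fun i => Rabs (eigs N (Msub rho sigma) i)).

Definition qscm (M : nat) (rho : Mat) : R :=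
  / log2 (INR M) * vnS M rho * tdist M rho (maxmixed M).

(** The spectrum of [rho^{(x) n} (x) I^{(x) n}] is the product of [n] copies of
    the spectrum [mu] of [rho] with [n] copies of the uniform vector [1/N]; its
    entropy is therefore additive, [n (S(rho) + log2 N)], and since [I] is a
    scalar the difference with the maximally mixed state is diagonal in the same
    basis, so its trace distance is the l1 distance of two product vectors,
    which a telescoping bound estimates by [n D(rho, I)]. Dividing the product
    by [log2 N^{2n} = 2 n log2 N] gives the first bound; the remaining two steps
    are algebra and [D <= 1].

    The functions [eigs], [vnS], [tdist] are defined through a spectral
    decomposition chosen by [epsilon], so every computation first shows that
    [sum_k g (lam k)] does not depend on the chosen decomposition when [g] is
    convex: if [A = E diag p E^* = W diag w W^*], the matrix
    [|<W_k, E_j>|^2] is doubly stochastic and [p j = sum_k |<W_k, E_j>|^2 w k],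
    so Jensen gives [sum g(p) <= sum g(w)] and, symmetrically, equality. *)

From Stdlib Require Import Reals Lra Lia Psatz ClassicalEpsilon.
From Pilot Require Import Defs.
From mathcomp Require all_boot all_order all_algebra Rstruct complex.
Open Scope R_scope.

Lemma C_eq (a b : C) : re a = re b -> im a = im b -> a = b.
Proof. destruct a, b; simpl; intros; subst; reflexivity. Qed.

Definition Csub (a b : C) : C := Cadd a (Copp b).

Lemma C_ring_theory : ring_theory C0 C1 Cadd Cmul Csub Copp (@eq C).
Proof.
  constructor; intros; try destruct x; try destruct y; try destruct z;
  apply C_eq; unfold Cadd, Cmul, Copp, Csub, C0, C1; simpl; ring.
Qed.
Add Ring C_ring : C_ring_theory.

Definition nsq (z : C) : R := re z * re z + im z * im z.

Ltac Csolve := intros; apply C_eq; unfold nsq; simpl; ring.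

Lemma Cconj_mul a b : Cconj (Cmul a b) = Cmul (Cconj a) (Cconj b).
Proof. Csolve. Qed.
Lemma Cconj_add a b : Cconj (Cadd a b) = Cadd (Cconj a) (Cconj b).
Proof. Csolve. Qed.
Lemma Cconj_conj a : Cconj (Cconj a) = a.
Proof. Csolve. Qed.
Lemma Cconj_RtoC x : Cconj (RtoC x) = RtoC x.
Proof. Csolve. Qed.
Lemma RtoC_mul x y : RtoC (x * y) = Cmul (RtoC x) (RtoC y).
Proof. Csolve. Qed.
Lemma RtoC_sub x y : RtoC (x - y) = Cadd (RtoC x) (Copp (RtoC y)).
Proof. Csolve. Qed.
Lemma RtoC_1 : RtoC 1 = C1.
Proof. Csolve. Qed.

Lemma nsq_ge0 z : 0 <= nsq z.
Proof. unfold nsq; nra. Qed.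
Lemma nsq_conj z : nsq (Cconj z) = nsq z.
Proof. unfold nsq; simpl; ring. Qed.
Lemma Cmul_conj_l z : Cmul (Cconj z) z = RtoC (nsq z).
Proof. Csolve. Qed.

Lemma Csum_ext n f g : (forall k, (k < n)%nat -> f k = g k) -> Csum n f = Csum n g.
Proof. induction n; simpl; intros; auto. rewrite IHn, H; auto. Qed.
Lemma Rsum_ext n f g : (forall k, (k < n)%nat -> f k = g k) -> Rsum n f = Rsum n g.
Proof. induction n; simpl; intros; auto. rewrite IHn, H; auto. Qed.

Lemma Csum_add n f g : Csum n (fun k => Cadd (f k) (g k)) = Cadd (Csum n f) (Csum n g).
Proof. induction n; simpl. Csolve. rewrite IHn; ring. Qed.
Lemma Csum_mul_l n c f : Csum n (fun k => Cmul c (f k)) = Cmul c (Csum n f).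
Proof. induction n; simpl. Csolve. rewrite IHn; ring. Qed.
Lemma Csum_mul_r n c f : Csum n (fun k => Cmul (f k) c) = Cmul (Csum n f) c.
Proof. induction n; simpl. Csolve. rewrite IHn; ring. Qed.
Lemma Csum_opp n f : Csum n (fun k => Copp (f k)) = Copp (Csum n f).
Proof. induction n; simpl. Csolve. rewrite IHn; ring. Qed.
Lemma Csum_conj n f : Cconj (Csum n f) = Csum n (fun k => Cconj (f k)).
Proof. induction n; simpl. Csolve. rewrite Cconj_add, IHn; auto. Qed.
Lemma Csum_zero n : Csum n (fun _ => C0) = C0.
Proof. induction n; simpl. auto. rewrite IHn. Csolve. Qed.
Lemma Csum_swap n m f :
  Csum n (fun i => Csum m (fun j => f i j)) = Csum m (fun j => Csum n (fun i => f i j)).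
Proof.
  induction n; simpl.
  - rewrite Csum_zero. reflexivity.
  - rewrite IHn, <- Csum_add. reflexivity.
Qed.
Lemma re_Csum n f : re (Csum n f) = Rsum n (fun k => re (f k)).
Proof. induction n; simpl; auto. rewrite IHn; auto. Qed.
Lemma RtoC_Rsum n f : RtoC (Rsum n f) = Csum n (fun k => RtoC (f k)).
Proof. induction n; simpl. reflexivity. rewrite <- IHn. Csolve. Qed.

Lemma Rsum_add n f g : Rsum n (fun k => f k + g k) = Rsum n f + Rsum n g.
Proof. induction n; simpl. ring. rewrite IHn; ring. Qed.
Lemma Rsum_mul_l n c f : Rsum n (fun k => c * f k) = c * Rsum n f.
Proof. induction n; simpl. ring. rewrite IHn; ring. Qed.
Lemma Rsum_mul_r n c f : Rsum n (fun k => f k * c) = Rsum n f * c.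
Proof. induction n; simpl. ring. rewrite IHn; ring. Qed.
Lemma Rsum_const n c : Rsum n (fun _ => c) = INR n * c.
Proof. induction n. simpl; ring. simpl Rsum. rewrite IHn, S_INR; ring. Qed.
Lemma Rsum_swap n m f :
  Rsum n (fun i => Rsum m (fun j => f i j)) = Rsum m (fun j => Rsum n (fun i => f i j)).
Proof.
  induction n; simpl.
  - rewrite Rsum_const. ring.
  - rewrite IHn, <- Rsum_add. reflexivity.
Qed.
Lemma Rsum_le n f g : (forall k, (k < n)%nat -> f k <= g k) -> Rsum n f <= Rsum n g.
Proof. induction n; simpl; intros. lra. apply Rplus_le_compat; auto. Qed.
Lemma Rsum_ge0 n f : (forall k, (k < n)%nat -> 0 <= f k) -> 0 <= Rsum n f.
Proof. intros H. rewrite <- (Rmult_0_r (INR n)), <- Rsum_const. now apply Rsum_le. Qed.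
Lemma Rsum_abs n f : Rabs (Rsum n f) <= Rsum n (fun k => Rabs (f k)).
Proof.
  induction n; simpl. rewrite Rabs_R0; lra.
  eapply Rle_trans. apply Rabs_triang. lra.
Qed.
Lemma Rsum_single n f i :
  (i < n)%nat -> (forall k, (k < n)%nat -> 0 <= f k) -> f i <= Rsum n f.
Proof.
  induction n; intros Hi Hf. lia. simpl.
  destruct (Nat.eq_dec i n).
  - subst. assert (0 <= Rsum n f) by (apply Rsum_ge0; intros; apply Hf; lia). lra.
  - assert (f i <= Rsum n f) by (apply IHn; [lia | intros; apply Hf; lia]).
    assert (0 <= f n) by (apply Hf; lia). lra.
Qed.

Lemma Csum_mul_sums a b f g :
  Cmul (Csum a f) (Csum b g) = Csum a (fun i => Csum b (fun j => Cmul (f i) (g j))).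
Proof.
  rewrite <- Csum_mul_r. apply Csum_ext; intros. rewrite <- Csum_mul_l. reflexivity.
Qed.
Lemma Rsum_mul_sums a b f g :
  Rsum a f * Rsum b g = Rsum a (fun i => Rsum b (fun j => f i * g j)).
Proof.
  rewrite <- Rsum_mul_r. apply Rsum_ext; intros. rewrite <- Rsum_mul_l. reflexivity.
Qed.

Lemma Csum_plus a b f : Csum (a + b) f = Cadd (Csum a f) (Csum b (fun k => f (a + k)%nat)).
Proof.
  induction b; simpl. rewrite Nat.add_0_r. Csolve.
  rewrite Nat.add_succ_r. simpl. rewrite IHb. ring.
Qed.
Lemma Rsum_plus a b f : Rsum (a + b) f = Rsum a f + Rsum b (fun k => f (a + k)%nat).
Proof.
  induction b; simpl. rewrite Nat.add_0_r. ring.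
  rewrite Nat.add_succ_r. simpl. rewrite IHb. ring.
Qed.

Lemma div_mod_of_lt d q r : (r < d)%nat -> ((q * d + r) / d = q /\ (q * d + r) mod d = r)%nat.
Proof.
  intros H. split.
  - rewrite Nat.div_add_l by lia. rewrite Nat.div_small by lia. lia.
  - rewrite Nat.add_comm, Nat.Div0.mod_add. apply Nat.mod_small; auto.
Qed.
Lemma div_lt_of_lt_mul a b i : (i < a * b)%nat -> (i / b < a)%nat.
Proof. intros H. apply Nat.Div0.div_lt_upper_bound. lia. Qed.
Lemma mod_lt_pos b i : (0 < b)%nat -> (i mod b < b)%nat.
Proof. intros H. apply Nat.mod_upper_bound. lia. Qed.

(* An index [m < a * b] is the pair [(m / b, m mod b)], as in [kron]. *)
Lemma Csum_prod a b F : (0 < b)%nat ->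
  Csum (a * b) (fun m => F (m / b)%nat (m mod b)%nat) = Csum a (fun i => Csum b (fun j => F i j)).
Proof.
  intros Hb. induction a; simpl. reflexivity.
  rewrite Nat.add_comm, Csum_plus, IHa. f_equal.
  apply Csum_ext; intros k Hk.
  destruct (div_mod_of_lt b a k Hk) as [-> ->]. reflexivity.
Qed.
Lemma Rsum_prod a b F : (0 < b)%nat ->
  Rsum (a * b) (fun m => F (m / b)%nat (m mod b)%nat) = Rsum a (fun i => Rsum b (fun j => F i j)).
Proof.
  intros Hb. induction a; simpl. reflexivity.
  rewrite Nat.add_comm, Rsum_plus, IHa. f_equal.
  apply Rsum_ext; intros k Hk.
  destruct (div_mod_of_lt b a k Hk) as [-> ->]. reflexivity.
Qed.

Lemma idM_sym i j : idM i j = idM j i.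
Proof. unfold idM. rewrite Nat.eqb_sym. reflexivity. Qed.
Lemma Cconj_idM i j : Cconj (idM i j) = idM i j.
Proof. unfold idM; destruct (Nat.eqb i j); Csolve. Qed.
Lemma Csum_idM_l n i f : (i < n)%nat -> Csum n (fun k => Cmul (idM i k) (f k)) = f i.
Proof.
  induction n; intros Hi. lia. simpl. unfold idM at 2.
  destruct (Nat.eq_dec i n).
  - subst. rewrite Nat.eqb_refl.
    rewrite (Csum_ext _ _ (fun _ => C0)).
    + rewrite Csum_zero. Csolve.
    + intros k Hk. unfold idM. replace (Nat.eqb n k) with false. Csolve.
      symmetry; apply Nat.eqb_neq; lia.
  - replace (Nat.eqb i n) with false by (symmetry; apply Nat.eqb_neq; auto).
    rewrite IHn by lia. Csolve.
Qed.
Lemma Rsum_delta n i f :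
  (i < n)%nat -> Rsum n (fun k => f k * (if Nat.eqb k i then 1 else 0)) = f i.
Proof.
  intros Hi. assert (H := Csum_idM_l n i (fun k => RtoC (f k)) Hi).
  apply (f_equal re) in H. rewrite re_Csum in H. simpl in H. rewrite <- H.
  apply Rsum_ext; intros k Hk. unfold idM. rewrite (Nat.eqb_sym k i).
  destruct (Nat.eqb i k); simpl; lra.
Qed.
Lemma nsq_idM m k : nsq (idM m k) = if Nat.eqb m k then 1 else 0.
Proof. unfold idM; destruct (Nat.eqb m k); unfold nsq; simpl; ring. Qed.
Lemma idM_kron d i j : (0 < d)%nat ->
  idM i j = Cmul (idM (i / d)%nat (j / d)%nat) (idM (i mod d)%nat (j mod d)%nat).
Proof.
  intros Hd. unfold idM.
  destruct (Nat.eq_dec i j) as [->|Hne].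
  - rewrite !Nat.eqb_refl. Csolve.
  - replace (Nat.eqb i j) with false by (symmetry; apply Nat.eqb_neq; auto).
    destruct (Nat.eqb_spec (i / d) (j / d)) as [E1|E1];
    destruct (Nat.eqb_spec (i mod d) (j mod d)) as [E2|E2]; try Csolve.
    exfalso. apply Hne. rewrite (Nat.div_mod_eq i d), (Nat.div_mod_eq j d). lia.
Qed.

Definition ip (n : nat) (u v : nat -> C) : C := Csum n (fun i => Cmul (Cconj (u i)) (v i)).
Definition col (U : Mat) (k : nat) : nat -> C := fun i => U i k.
Definition Qf (n : nat) (A : Mat) (v : nat -> C) : C :=
  Csum n (fun i => Csum n (fun j => Cmul (Cconj (v i)) (Cmul (A i j) (v j)))).

Lemma re_Qf_spectral d A U lam v : spectral d A U lam ->
  re (Qf d A v) = Rsum d (fun k => lam k * nsq (ip d (col U k) v)).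
Proof.
  intros [_ HA].
  assert (E : Qf d A v = RtoC (Rsum d (fun k => lam k * nsq (ip d (col U k) v)))).
  { unfold Qf.
    transitivity (Csum d (fun k => Csum d (fun i => Csum d (fun j =>
       Cmul (Cconj (v i)) (Cmul (Cmul (U i k) (Cmul (RtoC (lam k)) (Cconj (U j k)))) (v j)))))).
    - transitivity (Csum d (fun i => Csum d (fun k => Csum d (fun j =>
       Cmul (Cconj (v i)) (Cmul (Cmul (U i k) (Cmul (RtoC (lam k)) (Cconj (U j k)))) (v j)))))).
      + apply Csum_ext; intros i Hi. symmetry. rewrite Csum_swap. apply Csum_ext; intros j Hj.
        rewrite HA by auto. rewrite <- Csum_mul_r, <- Csum_mul_l. reflexivity.
      + rewrite Csum_swap. reflexivity.
    - rewrite RtoC_Rsum. apply Csum_ext; intros k Hk.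
      rewrite RtoC_mul, <- Cmul_conj_l. unfold ip. rewrite Csum_conj, Csum_mul_sums.
      rewrite <- Csum_mul_l. apply Csum_ext; intros i Hi.
      rewrite <- Csum_mul_l. apply Csum_ext; intros j Hj.
      unfold col. rewrite Cconj_mul, Cconj_conj. ring. }
  rewrite E. reflexivity.
Qed.

Lemma ip_col_unitary d U m k : unitary d U -> (m < d)%nat -> (k < d)%nat ->
  ip d (col U m) (col U k) = idM m k.
Proof. intros [_ H2] Hm Hk. rewrite <- (H2 m k Hm Hk). reflexivity. Qed.

Lemma re_Qf_spectral_col d A U lam k : spectral d A U lam -> (k < d)%nat ->
  re (Qf d A (col U k)) = lam k.
Proof.
  intros H Hk. rewrite (re_Qf_spectral _ _ _ _ _ H).
  rewrite <- (Rsum_delta d k lam Hk). apply Rsum_ext; intros m Hm.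
  rewrite ip_col_unitary by (apply H || auto). rewrite nsq_idM. reflexivity.
Qed.

Lemma parseval d U v : unitary d U ->
  Rsum d (fun k => nsq (ip d (col U k) v)) = re (ip d v v).
Proof.
  intros [H1 _].
  assert (E : Csum d (fun k => RtoC (nsq (ip d (col U k) v))) = ip d v v).
  { transitivity (Csum d (fun k => Csum d (fun i => Csum d (fun j =>
        Cmul (Cmul (Cconj (v i)) (v j)) (Cmul (U i k) (Cconj (U j k))))))).
    - apply Csum_ext; intros k Hk. rewrite <- Cmul_conj_l. unfold ip.
      rewrite Csum_conj, Csum_mul_sums. apply Csum_ext; intros i Hi.
      apply Csum_ext; intros j Hj. unfold col. rewrite Cconj_mul, Cconj_conj. ring.
    - rewrite Csum_swap. unfold ip. apply Csum_ext; intros i Hi.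
      rewrite Csum_swap.
      rewrite (Csum_ext _ _ (fun j => Cmul (idM i j) (Cmul (Cconj (v i)) (v j)))).
      + rewrite Csum_idM_l by auto. reflexivity.
      + intros j Hj. rewrite Csum_mul_l. rewrite <- (H1 i j Hi Hj). unfold mmul, adj. ring. }
  rewrite <- E, re_Csum. reflexivity.
Qed.

Lemma nsq_ip_sym d u v : nsq (ip d u v) = nsq (ip d v u).
Proof.
  rewrite <- nsq_conj. f_equal. unfold ip. rewrite Csum_conj. apply Csum_ext; intros.
  rewrite Cconj_mul, Cconj_conj. ring.
Qed.

Lemma Rsum_nsq_ip_col d U V j : unitary d U -> unitary d V -> (j < d)%nat ->
  Rsum d (fun k => nsq (ip d (col U k) (col V j))) = 1.
Proof.
  intros HU HV Hj. rewrite parseval by auto.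
  rewrite ip_col_unitary by auto. unfold idM. rewrite Nat.eqb_refl. reflexivity.
Qed.

Lemma Rsum_re_Qf_col d A U : unitary d U ->
  Rsum d (fun k => re (Qf d A (col U k))) = re (trace d A).
Proof.
  intros [H1 _]. rewrite <- re_Csum. f_equal. unfold Qf, trace, col.
  rewrite Csum_swap. apply Csum_ext; intros i Hi.
  rewrite Csum_swap.
  rewrite (Csum_ext _ _ (fun j => Cmul (idM i j) (A i j))).
  - rewrite Csum_idM_l by auto. reflexivity.
  - intros j Hj. rewrite idM_sym. rewrite <- (H1 j i Hj Hi). unfold mmul, adj.
    rewrite <- Csum_mul_r. apply Csum_ext; intros. ring.
Qed.

Lemma spectral_hermitian d A U lam : spectral d A U lam -> hermitian d A.
Proof.
  intros [_ HA] i j Hi Hj. unfold adj. rewrite (HA i j Hi Hj), (HA j i Hj Hi).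
  rewrite Csum_conj. apply Csum_ext; intros.
  rewrite !Cconj_mul, Cconj_conj, Cconj_RtoC. ring.
Qed.

Lemma spectral_nonneg_Qf d A U lam v : spectral d A U lam ->
  (forall k, (k < d)%nat -> 0 <= lam k) -> 0 <= re (Qf d A v).
Proof.
  intros H Hlam. rewrite (re_Qf_spectral _ _ _ _ _ H). apply Rsum_ge0; intros.
  apply Rmult_le_pos; auto. apply nsq_ge0.
Qed.

Lemma spectral_ext d A B U lam : Meq d A B -> spectral d A U lam -> spectral d B U lam.
Proof. intros HAB [HU HA]. split; auto. intros i j Hi Hj. rewrite <- HAB; auto. Qed.

Lemma spectral_Msub d A B U a b : spectral d A U a -> spectral d B U b ->
  spectral d (Msub A B) U (fun k => a k - b k).
Proof.
  intros [HU HA] [_ HB]. split; auto. intros i j Hi Hj.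
  unfold Msub. rewrite (HA i j Hi Hj), (HB i j Hi Hj).
  rewrite <- Csum_opp, <- Csum_add. apply Csum_ext; intros.
  rewrite RtoC_sub. ring.
Qed.

Lemma spectral_scalar d U c : unitary d U -> spectral d (Mscale c idM) U (fun _ => c).
Proof.
  intros HU. split; auto. intros i j Hi Hj. unfold Mscale.
  destruct HU as [H1 _]. rewrite <- (H1 i j Hi Hj). unfold mmul, adj.
  rewrite <- Csum_mul_l. apply Csum_ext; intros. ring.
Qed.

Lemma unitary_idM d : unitary d idM.
Proof.
  split; intros i j Hi Hj; unfold mmul, adj.
  - rewrite Csum_idM_l by auto. rewrite Cconj_idM, idM_sym. reflexivity.
  - rewrite (Csum_ext _ _ (fun k => Cmul (idM i k) (idM k j))).
    + rewrite Csum_idM_l by auto. reflexivity.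
    + intros. rewrite Cconj_idM, idM_sym. reflexivity.
Qed.

Lemma spectral_kron dA dB A B U V a b : (0 < dB)%nat ->
  spectral dA A U a -> spectral dB B V b ->
  spectral (dA * dB) (kron dB A B) (kron dB U V) (fun i => a (i / dB)%nat * b (i mod dB)%nat).
Proof.
  intros Hd [[HU1 HU2] HA] [[HV1 HV2] HB].
  split; [split|]; intros i j Hi Hj;
  pose proof (div_lt_of_lt_mul _ _ _ Hi); pose proof (div_lt_of_lt_mul _ _ _ Hj);
  pose proof (mod_lt_pos dB i Hd); pose proof (mod_lt_pos dB j Hd); unfold mmul, adj, kron.
  - rewrite (Csum_prod dA dB (fun m1 m2 => Cmul (Cmul (U (i / dB)%nat m1) (V (i mod dB)%nat m2))
        (Cconj (Cmul (U (j / dB)%nat m1) (V (j mod dB)%nat m2))))) by auto.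
    rewrite (idM_kron dB i j Hd), <- (HU1 _ _ H H0), <- (HV1 _ _ H1 H2).
    unfold mmul, adj. rewrite Csum_mul_sums. apply Csum_ext; intros; apply Csum_ext; intros.
    rewrite Cconj_mul. ring.
  - rewrite (Csum_prod dA dB (fun m1 m2 => Cmul (Cconj (Cmul (U m1 (i / dB)%nat) (V m2 (i mod dB)%nat)))
        (Cmul (U m1 (j / dB)%nat) (V m2 (j mod dB)%nat)))) by auto.
    rewrite (idM_kron dB i j Hd), <- (HU2 _ _ H H0), <- (HV2 _ _ H1 H2).
    unfold mmul, adj. rewrite Csum_mul_sums. apply Csum_ext; intros; apply Csum_ext; intros.
    rewrite Cconj_mul. ring.
  - rewrite (Csum_prod dA dB (fun m1 m2 => Cmul (Cmul (U (i / dB)%nat m1) (V (i mod dB)%nat m2))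
        (Cmul (RtoC (a m1 * b m2)) (Cconj (Cmul (U (j / dB)%nat m1) (V (j mod dB)%nat m2)))))) by auto.
    rewrite (HA _ _ H H0), (HB _ _ H1 H2), Csum_mul_sums.
    apply Csum_ext; intros; apply Csum_ext; intros.
    rewrite Cconj_mul, RtoC_mul. ring.
Qed.

(* the spectrum of a tensor power, indexed as in [tpow] *)
Fixpoint tpowv (d : nat) (a : nat -> R) (n : nat) : nat -> R :=
  match n with
  | O => fun _ => 1
  | S k => fun i => tpowv d a k (i / d)%nat * a (i mod d)%nat
  end.

Lemma natpow_succ_r d n : (d ^ S n = d ^ n * d)%nat.
Proof. simpl. lia. Qed.
Lemma natpow_pos d n : (0 < d)%nat -> (0 < d ^ n)%nat.
Proof. intros; apply Nat.neq_0_lt_0, Nat.pow_nonzero; lia. Qed.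

Lemma spectral_tpow d A U a n : (0 < d)%nat -> spectral d A U a ->
  spectral (d ^ n) (tpow d A n) (tpow d U n) (tpowv d a n).
Proof.
  intros Hd HA. induction n.
  - simpl. apply (spectral_ext 1 (Mscale 1 idM)).
    + intros i j _ _. unfold Mscale. rewrite RtoC_1. ring.
    + apply spectral_scalar, unitary_idM.
  - rewrite natpow_succ_r. apply spectral_kron; auto.
Qed.

(* The spectral theorem of mathcomp's [spectral.v], transported to [Mat]; the module
   confines mathcomp's notations, which clash with the ones used elsewhere. *)
Module SpectralTheorem.
Import all_boot all_order all_algebra Rstruct complex.
Import GRing.Theory Num.Theory.
Local Open Scope ring_scope.
Local Open Scope complex_scope.
Local Open Scope sesquilinear_scope.

Definition toC (c : Defs.C) : R[i] := (re c +i* im c)%C.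
Definition fromC (z : R[i]) : Defs.C := mkC (complex.Re z) (complex.Im z).

Lemma fromCK z : toC (fromC z) = z. Proof. by case: z. Qed.
Lemma toC_inj : injective toC. Proof. by case=> a b [c d] [-> ->]. Qed.
Lemma toC_mul a b : toC (Cmul a b) = toC a * toC b. Proof. by []. Qed.
Lemma toC_conj a : toC (Cconj a) = Num.conj (toC a). Proof. by []. Qed.
Lemma toC_Csum n f : toC (Csum n f) = \sum_(k < n) toC (f k).
Proof. elim: n => [|n IH]; [by rewrite big_ord0 | by rewrite big_ord_recr /= -IH]. Qed.
Lemma toC_idM i j : toC (idM i j) = (i == j)%:R.
Proof. rewrite /idM; case: (Nat.eqb_spec i j) => [->|/eqP /negbTE ->]; by rewrite ?eqxx. Qed.
Lemma toC_RtoC_Re (z : R[i]) : z \is Num.real -> toC (RtoC (complex.Re z)) = z.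
Proof.
move=> /CrealP; case: z => a b /= [] hb; congr (_ +i* _).
change (Ropp b = b) in hb; symmetry; change (b = Rdefinitions.IZR BinNums.Z0); lra.
Qed.

(* extension by [C0] / [0] outside the index range *)
Definition ofM {d} (M : 'M[R[i]]_d) : Mat := fun i j =>
  match @insub _ (fun k => (k < d)%N) ('I_d) i, @insub _ (fun k => (k < d)%N) ('I_d) j with
  | Some i', Some j' => fromC (M i' j') | _, _ => C0 end.
Definition ofrow {d} (D : 'rV[R[i]]_d) : nat -> Rdefinitions.R := fun k =>
  match @insub _ (fun k => (k < d)%N) ('I_d) k with
  | Some k' => complex.Re (D 0 k') | None => 0%R end.

Lemma ofME d (M : 'M[R[i]]_d) (i j : 'I_d) : ofM M i j = fromC (M i j).
Proof. by rewrite /ofM !valK. Qed.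

Lemma Meq_of_toC (d : nat) (A B : Mat) :
  (forall i j : 'I_d, toC (A i j) = toC (B i j)) -> Meq d A B.
Proof.
move=> H i j /ltP hi /ltP hj; apply: toC_inj.
exact: (H (Ordinal hi) (Ordinal hj)).
Qed.

Lemma hermitian_spectral_exists (d : nat) (A : Mat) :
  Defs.hermitian d A -> exists U lam, Defs.spectral d A U lam.
Proof.
move=> HA.
pose M := \matrix_(i < d, j < d) toC (A i j).
have HM : M ^t* = M.
  apply/matrixP => i j; rewrite !mxE (HA i j (ltP (ltn_ord i)) (ltP (ltn_ord j))).
  by rewrite toC_conj.
have Hherm : M \is hermsymmx by apply/is_hermitianmxP; rewrite expr0 scale1r HM.
pose P := spectralmx M; pose D := spectral_diag M.
have Punit : P \is unitarymx := spectral_unitarymx M.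
have eqM : M = P^t* *m diag_mx D *m P.
  by rewrite -invmx_unitary //; apply/orthomx_spectralP; apply/normalmxP; rewrite HM.
have PPt : P *m P^t* = 1%:M by apply/unitarymxP.
have PtP : P^t* *m P = 1%:M.
  have : P^t* \is unitarymx by rewrite trmxC_unitary.
  by move/unitarymxP; rewrite trmxCK.
have lamE (k : 'I_d) : toC (RtoC (ofrow D k)) = D 0 k.
  rewrite /ofrow valK toC_RtoC_Re //.
  by move/mxOverP: (hermitian_spectral_diag_real Hherm) => /(_ 0 k).
exists (ofM (P^t*)), (ofrow D); split; [split|]; apply: Meq_of_toC => i j.
- rewrite toC_Csum toC_idM.
  under eq_bigr => k _ do rewrite toC_mul /adj toC_conj !ofME !fromCK.
  have := congr1 (fun X : 'M[R[i]]_d => X i j) PtP.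
  by rewrite !mxE => <-; apply: eq_bigr => k _; rewrite !mxE conjCK.
- rewrite toC_Csum toC_idM.
  under eq_bigr => k _ do rewrite toC_mul /adj toC_conj !ofME !fromCK.
  have := congr1 (fun X : 'M[R[i]]_d => X i j) PPt.
  by rewrite !mxE => <-; apply: eq_bigr => k _; rewrite !mxE conjCK mulrC.
- rewrite toC_Csum.
  under eq_bigr => k _ do rewrite !toC_mul toC_conj !ofME !fromCK lamE.
  have -> : toC (A i j) = M i j by rewrite mxE.
  by rewrite eqM mul_mx_diag !mxE; apply: eq_bigr => k _; rewrite !mxE conjCK mulrA.
Qed.
End SpectralTheorem.

Lemma spectral_eigs d A : hermitian d A -> exists U, spectral d A U (eigs d A).
Proof.
  intros H. unfold eigs.
  apply (epsilon_spec (inhabits (fun _ : nat => 0)) (fun lam => exists U, spectral d A U lam)).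
  destruct (SpectralTheorem.hermitian_spectral_exists d A H) as [U [lam HU]].
  now exists lam, U.
Qed.

Definition jensen_on (P : R -> Prop) (g : R -> R) : Prop :=
  forall d (w x : nat -> R), (forall k, (k < d)%nat -> 0 <= w k) -> Rsum d w = 1 ->
    (forall k, (k < d)%nat -> P (x k)) ->
    g (Rsum d (fun k => w k * x k)) <= Rsum d (fun k => w k * g (x k)).

Lemma spectral_Rsum_le d A E p W w (P : R -> Prop) g :
  spectral d A E p -> spectral d A W w -> (forall k, (k < d)%nat -> P (w k)) ->
  jensen_on P g -> Rsum d (fun j => g (p j)) <= Rsum d (fun k => g (w k)).
Proof.
  intros HE HW HP Hg.
  set (T := fun j k => nsq (ip d (col W k) (col E j))).
  transitivity (Rsum d (fun j => Rsum d (fun k => T j k * g (w k)))).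
  - apply Rsum_le; intros j Hj.
    rewrite <- (re_Qf_spectral_col _ _ _ _ _ HE Hj), (re_Qf_spectral _ _ _ _ _ HW).
    rewrite (Rsum_ext _ _ (fun k => T j k * w k)) by (intros; unfold T; ring).
    apply Hg; auto.
    + intros; apply nsq_ge0.
    + apply Rsum_nsq_ip_col; [apply HW | apply HE | auto].
  - rewrite Rsum_swap. apply Req_le, Rsum_ext; intros k Hk.
    rewrite Rsum_mul_r. unfold T.
    rewrite (Rsum_ext _ _ (fun j => nsq (ip d (col E j) (col W k)))) by (intros; apply nsq_ip_sym).
    rewrite Rsum_nsq_ip_col by (apply HE || apply HW || auto). ring.
Qed.

Lemma spectral_Rsum_eq d A E p W w (P : R -> Prop) g :
  spectral d A E p -> spectral d A W w ->
  (forall k, (k < d)%nat -> P (p k)) -> (forall k, (k < d)%nat -> P (w k)) ->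
  jensen_on P g -> Rsum d (fun k => g (p k)) = Rsum d (fun k => g (w k)).
Proof.
  intros HE HW Hp Hw Hg.
  apply Rle_antisym; eapply spectral_Rsum_le; eauto.
Qed.

Lemma jensen_on_Rabs : jensen_on (fun _ => True) Rabs.
Proof.
  intros d w x Hw _ _. eapply Rle_trans. apply Rsum_abs. apply Rsum_le; intros k Hk.
  rewrite Rabs_mult, (Rabs_pos_eq (w k)) by auto. lra.
Qed.

Lemma ln_le_sub1 y : 0 < y -> ln y <= y - 1.
Proof. intros H. pose proof (exp_ineq1_le (ln y)). rewrite exp_ln in H0 by auto. lra. Qed.
Lemma ln2_pos : 0 < ln 2.
Proof. pose proof ln_lt_2. lra. Qed.

Lemma xlogx_pos x : 0 < x -> xlogx x = x * (ln x / ln 2).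
Proof. intros H. unfold xlogx, log2. destruct (Rle_dec x 0); lra. Qed.
Lemma xlogx_nonpos x : x <= 0 -> xlogx x = 0.
Proof. intros H. unfold xlogx. destruct (Rle_dec x 0); lra. Qed.

Lemma xlogx_mul x y : 0 <= x -> 0 <= y -> xlogx (x * y) = x * xlogx y + y * xlogx x.
Proof.
  intros Hx Hy. destruct (Req_dec x 0) as [->|Hx0].
  - rewrite Rmult_0_l, xlogx_nonpos by lra. ring.
  - destruct (Req_dec y 0) as [->|Hy0].
    + rewrite Rmult_0_r, xlogx_nonpos by lra. ring.
    + rewrite !xlogx_pos by (try apply Rmult_lt_0_compat; lra).
      rewrite ln_mult by lra. field. pose proof ln2_pos; lra.
Qed.

Lemma xlogx_le0 x : x <= 1 -> xlogx x <= 0.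
Proof.
  intros H1. destruct (Rle_dec x 0). { rewrite xlogx_nonpos; lra. }
  rewrite xlogx_pos by lra. pose proof ln2_pos. pose proof (ln_le_sub1 x).
  assert (0 <= x * (- ln x / ln 2)) by (apply Rmult_le_pos; [lra|]; apply Rmult_le_pos;
    [lra | apply Rlt_le, Rinv_0_lt_compat; lra]).
  replace (x * (ln x / ln 2)) with (- (x * (- ln x / ln 2))) by (field; lra). lra.
Qed.

(* tangent line of [x log2 x] at [p > 0] *)
Lemma xlogx_tangent p x : 0 < p -> 0 <= x ->
  (x * (ln p + 1) - p) / ln 2 <= xlogx x.
Proof.
  intros Hp Hx. pose proof ln2_pos. destruct (Rle_dec x 0).
  - replace x with 0 by lra. rewrite xlogx_nonpos by lra.
    unfold Rdiv. rewrite Rmult_0_l, Rminus_0_l, <- Ropp_mult_distr_l.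
    assert (0 <= p * / ln 2) by (apply Rmult_le_pos; [lra | apply Rlt_le, Rinv_0_lt_compat; lra]).
    lra.
  - rewrite xlogx_pos by lra.
    assert (Hl := ln_le_sub1 (p / x) ltac:(apply Rdiv_lt_0_compat; lra)).
    unfold Rdiv in Hl. rewrite ln_mult, ln_Rinv in Hl by (try apply Rinv_0_lt_compat; lra).
    assert (K : x * (ln p - ln x) <= p - x).
    { assert (x * (ln p + - ln x) <= x * (p * / x - 1)) by (apply Rmult_le_compat_l; lra).
      replace (x * (p * / x - 1)) with (p - x) in H0 by (field; lra). lra. }
    replace (x * (ln x / ln 2)) with ((x * ln x) / ln 2) by (field; lra).
    unfold Rdiv. apply Rmult_le_compat_r; [apply Rlt_le, Rinv_0_lt_compat |]; lra.
Qed.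

Lemma jensen_on_xlogx : jensen_on (Rle 0) xlogx.
Proof.
  intros d w x Hw Hs Hx. set (p := Rsum d (fun k => w k * x k)).
  assert (Hwx : forall k, (k < d)%nat -> 0 <= w k * x k) by (intros; apply Rmult_le_pos; auto).
  assert (Hp0 : 0 <= p) by (apply Rsum_ge0; auto).
  destruct (Rle_dec p 0) as [Hp|Hp].
  - rewrite xlogx_nonpos by auto. apply Rsum_ge0; intros k Hk.
    assert (E : w k * x k = 0).
    { pose proof (Rsum_single d (fun k => w k * x k) k Hk Hwx). pose proof (Hwx k Hk). fold p in H. lra. }
    apply Rmult_integral in E. destruct E as [-> | ->].
    + lra.
    + rewrite xlogx_nonpos by lra. lra.
  - pose proof ln2_pos.
    transitivity (Rsum d (fun k => w k * ((x k * (ln p + 1) - p) / ln 2))).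
    + rewrite xlogx_pos by lra.
      rewrite (Rsum_ext _ _ (fun k => (w k * x k) * ((ln p + 1) / ln 2) + w k * (- p / ln 2)))
        by (intros; field; lra).
      rewrite Rsum_add, !Rsum_mul_r. fold p. rewrite Hs. apply Req_le. field. lra.
    + apply Rsum_le; intros k Hk. apply Rmult_le_compat_l; auto.
      apply xlogx_tangent; auto; lra.
Qed.

Lemma eigs_nonneg d A U lam : spectral d A U lam -> (forall k, (k < d)%nat -> 0 <= lam k) ->
  exists W, spectral d A W (eigs d A) /\ forall k, (k < d)%nat -> 0 <= eigs d A k.
Proof.
  intros HA Hlam. destruct (spectral_eigs d A (spectral_hermitian _ _ _ _ HA)) as [W HW].
  exists W. split; auto. intros k Hk.
  rewrite <- (re_Qf_spectral_col _ _ _ _ _ HW Hk). exact (spectral_nonneg_Qf _ _ _ _ _ HA Hlam).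
Qed.

Lemma vnS_spectral d A U p : spectral d A U p -> (forall k, (k < d)%nat -> 0 <= p k) ->
  vnS d A = - Rsum d (fun k => xlogx (p k)).
Proof.
  intros HA Hp. destruct (eigs_nonneg d A U p HA Hp) as [W [HW Hw]].
  unfold vnS. f_equal. eapply spectral_Rsum_eq; eauto. apply jensen_on_xlogx.
Qed.

Lemma tdist_spectral d A B U a b : spectral d A U a -> spectral d B U b ->
  tdist d A B = / 2 * Rsum d (fun k => Rabs (a k - b k)).
Proof.
  intros HA HB. pose proof (spectral_Msub _ _ _ _ _ _ HA HB) as HAB.
  destruct (spectral_eigs _ _ (spectral_hermitian _ _ _ _ HAB)) as [W HW].
  unfold tdist. f_equal. apply (spectral_Rsum_eq d (Msub A B) W _ U _ (fun _ => True)); auto.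
  apply jensen_on_Rabs.
Qed.

Definition probvec (d : nat) (p : nat -> R) : Prop :=
  (forall k, (k < d)%nat -> 0 <= p k) /\ Rsum d p = 1.

Lemma probvec_uniform d : (0 < d)%nat -> probvec d (fun _ => / INR d).
Proof.
  intros Hd. assert (0 < INR d) by (apply lt_0_INR; auto). split.
  - intros; apply Rlt_le, Rinv_0_lt_compat; auto.
  - rewrite Rsum_const. field. lra.
Qed.

Lemma probvec_prod a b f g : (0 < b)%nat -> probvec a f -> probvec b g ->
  probvec (a * b) (fun m => f (m / b)%nat * g (m mod b)%nat).
Proof.
  intros Hb [Hf0 Hf1] [Hg0 Hg1]. split.
  - intros m Hm. apply Rmult_le_pos;
      [apply Hf0, (div_lt_of_lt_mul _ _ _ Hm) | apply Hg0, mod_lt_pos; auto].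
  - rewrite (Rsum_prod a b (fun i j => f i * g j)) by auto.
    rewrite <- Rsum_mul_sums, Hf1, Hg1. ring.
Qed.

Lemma probvec_tpowv d a n : (0 < d)%nat -> probvec d a -> probvec (d ^ n) (tpowv d a n).
Proof.
  intros Hd Ha. induction n.
  - split; simpl; intros; lra.
  - rewrite natpow_succ_r. apply probvec_prod; auto.
Qed.

Lemma tpowv_const d c n i : tpowv d (fun _ => c) n i = c ^ n.
Proof. revert i. induction n; intros; simpl. reflexivity. rewrite IHn. ring. Qed.

Lemma Rsum_xlogx_prod a b f g : (0 < b)%nat -> probvec a f -> probvec b g ->
  Rsum (a * b) (fun m => xlogx (f (m / b)%nat * g (m mod b)%nat)) =
  Rsum a (fun i => xlogx (f i)) + Rsum b (fun j => xlogx (g j)).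
Proof.
  intros Hb [Hf0 Hf1] [Hg0 Hg1].
  rewrite (Rsum_prod a b (fun i j => xlogx (f i * g j))) by auto.
  transitivity (Rsum a (fun i => xlogx (f i)) * Rsum b g + Rsum a f * Rsum b (fun j => xlogx (g j))).
  - rewrite !Rsum_mul_sums, <- Rsum_add. apply Rsum_ext; intros i Hi.
    rewrite <- Rsum_add. apply Rsum_ext; intros j Hj. rewrite xlogx_mul by auto. ring.
  - rewrite Hf1, Hg1. ring.
Qed.

Lemma Rsum_xlogx_tpowv d a n : (0 < d)%nat -> probvec d a ->
  Rsum (d ^ n) (fun i => xlogx (tpowv d a n i)) = INR n * Rsum d (fun k => xlogx (a k)).
Proof.
  intros Hd Ha. induction n.
  - simpl. rewrite xlogx_pos, ln_1 by lra. field. pose proof ln2_pos; lra.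
  - rewrite natpow_succ_r. simpl tpowv.
    rewrite Rsum_xlogx_prod by (auto; apply probvec_tpowv; auto).
    rewrite IHn, S_INR. ring.
Qed.

Lemma Rsum_absdiff_prod a b f g h k : (0 < b)%nat ->
  Rsum (a * b) (fun m => Rabs (f (m / b)%nat * g (m mod b)%nat - h (m / b)%nat * k (m mod b)%nat)) <=
  Rsum a (fun i => Rabs (f i - h i)) * Rsum b (fun j => Rabs (g j)) +
  Rsum a (fun i => Rabs (h i)) * Rsum b (fun j => Rabs (g j - k j)).
Proof.
  intros Hb.
  rewrite (Rsum_prod a b (fun i j => Rabs (f i * g j - h i * k j))) by auto.
  rewrite !Rsum_mul_sums, <- Rsum_add. apply Rsum_le; intros i Hi.
  rewrite <- Rsum_add. apply Rsum_le; intros j Hj.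
  replace (f i * g j - h i * k j) with ((f i - h i) * g j + h i * (g j - k j)) by ring.
  eapply Rle_trans. apply Rabs_triang. rewrite !Rabs_mult. lra.
Qed.

Lemma Rsum_abs_probvec d p : probvec d p -> Rsum d (fun k => Rabs (p k)) = 1.
Proof. intros [Hp0 Hp1]. rewrite <- Hp1. apply Rsum_ext; intros. apply Rabs_pos_eq; auto. Qed.

Lemma Rsum_absdiff_tpowv d a c n : (0 < d)%nat -> probvec d a -> probvec d c ->
  Rsum (d ^ n) (fun i => Rabs (tpowv d a n i - tpowv d c n i))
    <= INR n * Rsum d (fun k => Rabs (a k - c k)).
Proof.
  intros Hd Ha Hc. induction n.
  - simpl. rewrite Rminus_diag, Rabs_R0. lra.
  - rewrite natpow_succ_r. simpl tpowv.
    eapply Rle_trans. apply Rsum_absdiff_prod; auto.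
    rewrite (Rsum_abs_probvec d a), (Rsum_abs_probvec (d ^ n) (tpowv d c n))
      by (auto; apply probvec_tpowv; auto).
    rewrite S_INR. lra.
Qed.

Lemma Rsum_absdiff_probvec_le2 d a b : probvec d a -> probvec d b ->
  Rsum d (fun k => Rabs (a k - b k)) <= 2.
Proof.
  intros [Ha0 Ha1] [Hb0 Hb1]. apply Rle_trans with (Rsum d (fun k => a k + b k)).
  - apply Rsum_le; intros k Hk. specialize (Ha0 k Hk); specialize (Hb0 k Hk).
    unfold Rabs; destruct (Rcase_abs _); lra.
  - rewrite Rsum_add, Ha1, Hb1. lra.
Qed.

Lemma density_spectral d rho : density d rho ->
  exists U, spectral d rho U (eigs d rho) /\ probvec d (eigs d rho).
Proof.
  intros [Hh [Hpsd Htr]]. destruct (spectral_eigs d rho Hh) as [U HU].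
  exists U. split; [auto | split].
  - intros k Hk. rewrite <- (re_Qf_spectral_col _ _ _ _ _ HU Hk). apply Hpsd.
  - rewrite (Rsum_ext _ _ (fun k => re (Qf d rho (col U k)))).
    + rewrite Rsum_re_Qf_col by apply HU. rewrite Htr. reflexivity.
    + intros k Hk. symmetry. apply (re_Qf_spectral_col _ _ _ _ _ HU Hk).
Qed.

Lemma spectral_maxmixed d U : unitary d U -> spectral d (maxmixed d) U (fun _ => / INR d).
Proof. apply spectral_scalar. Qed.

Lemma vnS_ge0 d A U a : spectral d A U a -> probvec d a -> 0 <= vnS d A.
Proof.
  intros HA [Ha0 Ha1]. rewrite (vnS_spectral _ _ _ _ HA Ha0).
  assert (Rsum d (fun k => xlogx (a k)) <= Rsum d (fun _ => 0)); [|rewrite Rsum_const in H; lra].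
  apply Rsum_le; intros k Hk. apply xlogx_le0.
  rewrite <- Ha1. apply Rsum_single; auto.
Qed.

Lemma vnS_maxmixed d : (0 < d)%nat -> vnS d (maxmixed d) = log2 (INR d).
Proof.
  intros Hd. assert (0 < INR d) by (apply lt_0_INR; auto). pose proof ln2_pos.
  rewrite (vnS_spectral _ _ _ _ (spectral_maxmixed d idM (unitary_idM d))) by
    (apply probvec_uniform; auto).
  rewrite Rsum_const, xlogx_pos, ln_Rinv by (try apply Rinv_0_lt_compat; lra).
  unfold log2. field. lra.
Qed.

Lemma vnS_kron dA dB A B U V a b : (0 < dB)%nat ->
  spectral dA A U a -> probvec dA a -> spectral dB B V b -> probvec dB b ->
  vnS (dA * dB) (kron dB A B) = vnS dA A + vnS dB B.
Proof.
  intros Hd HA Ha HB Hb.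
  rewrite (vnS_spectral _ _ _ _ (spectral_kron _ _ _ _ _ _ _ _ Hd HA HB))
    by (apply probvec_prod; auto).
  rewrite Rsum_xlogx_prod, (vnS_spectral _ _ _ _ HA), (vnS_spectral _ _ _ _ HB)
    by (apply Ha || apply Hb || auto). ring.
Qed.

Lemma vnS_tpow d A U a n : (0 < d)%nat -> spectral d A U a -> probvec d a ->
  vnS (d ^ n) (tpow d A n) = INR n * vnS d A.
Proof.
  intros Hd HA Ha.
  rewrite (vnS_spectral _ _ _ _ (spectral_tpow _ _ _ _ n Hd HA)) by (apply probvec_tpowv; auto).
  rewrite Rsum_xlogx_tpowv, (vnS_spectral _ _ _ _ HA) by (apply Ha || auto). ring.
Qed.

Lemma tdist_ge0 d A B : 0 <= tdist d A B.
Proof. unfold tdist; apply Rmult_le_pos; [lra | apply Rsum_ge0; intros; apply Rabs_pos]. Qed.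

Lemma tdist_le1 d A B U a b : spectral d A U a -> probvec d a ->
  spectral d B U b -> probvec d b -> tdist d A B <= 1.
Proof.
  intros HA Ha HB Hb. rewrite (tdist_spectral _ _ _ _ _ _ HA HB).
  pose proof (Rsum_absdiff_probvec_le2 _ _ _ Ha Hb). lra.
Qed.

(* [I] is scalar, so [A^{(x) n} (x) I^{(x) n}] and the maximally mixed state are
   diagonal in a common basis. *)
Lemma tdist_tpow_maxmixed d A U a n : (0 < d)%nat -> spectral d A U a -> probvec d a ->
  tdist (d ^ n * d ^ n) (kron (d ^ n) (tpow d A n) (tpow d (maxmixed d) n))
        (maxmixed (d ^ n * d ^ n))
  <= INR n * tdist d A (maxmixed d).
Proof.
  intros Hd HA Ha.
  assert (HK := natpow_pos d n Hd).
  set (u := fun _ : nat => / INR d).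
  assert (Hu : probvec d u) by (apply probvec_uniform; auto).
  set (f := tpowv d a n). set (g := tpowv d u n).
  assert (HX := spectral_kron _ _ _ _ _ _ _ _ HK (spectral_tpow _ _ _ _ n Hd HA)
                  (spectral_tpow _ _ _ _ n Hd (spectral_maxmixed d idM (unitary_idM d)))).
  assert (HI := spectral_maxmixed _ _ (proj1 HX)).
  rewrite (tdist_spectral _ _ _ _ _ _ HX HI).
  rewrite (tdist_spectral _ _ _ _ _ _ HA (spectral_maxmixed d U (proj1 HA))).
  fold u f g.
  assert (Hg : forall i, / INR (d ^ n * d ^ n) = g (i / d ^ n)%nat * g (i mod d ^ n)%nat).
  { intros. unfold g, u. rewrite !tpowv_const, mult_INR, pow_INR, Rinv_mult, pow_inv.
    reflexivity. }
  rewrite (Rsum_ext _ _ (fun i => Rabs (f (i / d ^ n)%nat * g (i mod d ^ n)%nat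
                                       - g (i / d ^ n)%nat * g (i mod d ^ n)%nat)))
    by (intros i _; rewrite (Hg i); reflexivity).
  assert (Hfg := Rsum_absdiff_tpowv d a u n Hd Ha Hu). fold f g in Hfg.
  pose proof (Rsum_absdiff_prod (d ^ n) (d ^ n) f g g g HK) as Hprod.
  rewrite (Rsum_ext (d ^ n) (fun j => Rabs (g j - g j)) (fun _ => 0)) in Hprod
    by (intros; rewrite Rminus_diag, Rabs_R0; auto).
  rewrite Rsum_const, (Rsum_abs_probvec _ g) in Hprod by (apply probvec_tpowv; auto).
  unfold u in Hfg. lra.
Qed.

Lemma log2_INR_pow d k : (0 < d)%nat -> log2 (INR (d ^ k)) = INR k * log2 (INR d).
Proof.
  intros Hd. assert (0 < INR d) by (apply lt_0_INR; auto).
  unfold log2. rewrite pow_INR, ln_pow by auto. field. pose proof ln2_pos. lra.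
Qed.

Lemma log2_pos x : 1 < x -> 0 < log2 x.
Proof.
  intros H. unfold log2. apply Rdiv_lt_0_compat; [|apply ln2_pos].
  rewrite <- ln_1. apply ln_increasing; lra.
Qed.

Lemma complexity_product_bound (n L S D SX DX : R) :
  0 < n -> 0 < L -> 0 <= S -> 0 <= DX -> SX = n * (S + L) -> DX <= n * D ->
  / (2 * n * L) * SX * DX <= n * ((S + L) / (2 * L)) * D.
Proof.
  intros Hn HL HS HDX -> HD.
  replace (n * ((S + L) / (2 * L)) * D) with (/ (2 * n * L) * (n * (S + L)) * (n * D))
    by (field; lra).
  apply Rmult_le_compat_l; auto.
  apply Rmult_le_pos; [apply Rlt_le, Rinv_0_lt_compat |]; nra.
Qed.

Theorem mainTheorem6 (N n : nat) (rho : Mat)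
  (hN : (2 <= N)%nat) (hn : (1 <= n)%nat) (hrho : density N rho) :
  let X := kron (N ^ n) (tpow N rho n) (tpow N (maxmixed N) n) in
  let B := INR n * ((vnS N rho + log2 (INR N)) / (2 * log2 (INR N)))
             * tdist N rho (maxmixed N) in
  qscm (N ^ (2 * n)) X <= B /\
  B = INR n * (qscm N rho / 2 + tdist N rho (maxmixed N) / 2) /\
  INR n * (qscm N rho / 2 + tdist N rho (maxmixed N) / 2)
    <= INR n * (qscm N rho / 2 + / 2).
Proof.
  intros X B.
  assert (HN : (0 < N)%nat) by lia.
  assert (HnR : 0 < INR n) by (apply lt_0_INR; lia).
  assert (HL : 0 < log2 (INR N)) by (apply log2_pos, (lt_INR 1); lia).
  destruct (density_spectral N rho hrho) as [U [HU Hmu]].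
  assert (HI := spectral_maxmixed N idM (unitary_idM N)).
  assert (Hu := probvec_uniform N HN).
  assert (HD1 : tdist N rho (maxmixed N) <= 1)
    by exact (tdist_le1 _ _ _ _ _ _ HU Hmu (spectral_maxmixed N U (proj1 HU)) Hu).
  split; [|split].
  - unfold qscm. rewrite log2_INR_pow, mult_INR by auto.
    replace (N ^ (2 * n))%nat with (N ^ n * N ^ n)%nat by (rewrite <- Nat.pow_add_r; f_equal; lia).
    apply complexity_product_bound; auto.
    + apply (vnS_ge0 _ _ _ _ HU Hmu).
    + apply tdist_ge0.
    + unfold X. rewrite (vnS_kron _ _ _ _ _ _ _ _ (natpow_pos N n HN)
        (spectral_tpow _ _ _ _ n HN HU) (probvec_tpowv _ _ n HN Hmu)
        (spectral_tpow _ _ _ _ n HN HI) (probvec_tpowv _ _ n HN Hu)).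
      rewrite (vnS_tpow _ _ _ _ _ HN HU Hmu), (vnS_tpow _ _ _ _ _ HN HI Hu), vnS_maxmixed by auto.
      ring.
    + exact (tdist_tpow_maxmixed _ _ _ _ n HN HU Hmu).
  - unfold B, qscm. field. lra.
  - apply Rmult_le_compat_l; lra.
Qed.
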